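(* Let $(X_B,X_C,X_R)$ be an OCC of a graph $G$, let $f_X \colon X_B\to\{0,1\}$ be a proper $2$-coloring of $G[X_B]$, and let $B^\ast \subseteq X_B$ satisfy property $(\star)$ with respect to $G$, $(X_B,X_C,X_R)$ and $f_X$. Let $C_1, C_2 \subseteq X_C$ be disjoint and let $f_C \colon C_1 \to \{0,1\}$ be an arbitrary (not necessarily proper) $2$-coloring. Define $A := \{b \in X_B : b$ has a neighbor $c \in C_1$ with $f_X(b) = f_C(c)\}$, $R := \{b \in X_B : b$ has a neighbor $c \in C_1$ with $f_X(b) \neq f_C(c)\}$, and $N := N_G(C_2) \cap X_B$. If $G[X_B]$ has an $\{A,R,N\}$-separator of size at most $|X_C|$, then $B^\ast$ contains a minimum-size $\{A,R,N\}$-separator of $G[X_B]$.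
   Context: An odd cycle cut (OCC) of $G$ is a partition $(X_B, X_C, X_R)$ of $V(G)$ such that $G[X_B]$ is bipartite, there is no edge between $X_B$ and $X_R$, and $X_B \cup X_C \neq \emptyset$. A vertex set $X$ separates vertex sets $S,T$ in a graph if no connected component of the graph minus $X$ contains both a vertex of $S$ and a vertex of $T$ ($X$ may intersect $S\cup T$); a $\{T_1,\dots,T_m\}$-separator separates $T_i$ and $T_j$ for all $i\ne j$. Auxiliary graph: $G_{\mathrm{aux}}$ is obtained from a copy of $G[X_B]$ by adding, for each $v \in X_C$, two new vertices $v^{(0)}, v^{(1)}$, and for each $u \in N_G(v) \cap X_B$ the edge $v^{(f_X(u))}u$; let $T := \{v^{(i)} : v \in X_C, i \in \{0,1\}\}$, so $|T| = 2|X_C|$. Property $(\star)$ of a set $B^\ast \subseteq X_B$: for every partition $(T_1,T_2,T_3,T_X)$ of $T$ into four possibly empty parts, if there exists $S \subseteq X_B$ with $|S| \le |T|$ such that $S$ separates $T_i$ and $T_j$ in $G_{\mathrm{aux}} - T_X$ for all $1 \le i < j \le 3$, then $B^\ast$ contains such a set $S$ of minimum possible size. (Such a $B^\ast$ with $|B^\ast| = |X_C|^{\mathcal{O}(1)}$ is computable in time $2^{\mathcal{O}(|X_C|)} n^{\mathcal{O}(1)}$.) *)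

From mathcomp Require Import all_boot.
Set Implicit Arguments. Unset Strict Implicit. Unset Printing Implicit Defensive.

(* A simple graph: vertex type T : finType, adjacency e : rel T
   (assumed symmetric and irreflexive in the theorem). *)

Definition restr (T : finType) (e : rel T) (W : {set T}) : rel T :=
  [rel x y | [&& x \in W, y \in W & e x y]].

(* In the graph (V, e) (i.e. G[V]), the vertex set X separates S and U:
   no connected component of G[V] - X contains both a vertex of S and of U.
   X may intersect S and U. *)
Definition separates (T : finType) (e : rel T) (V X S U : {set T}) : Prop :=
  forall s u, s \in S -> u \in U -> s \in V :\: X -> u \in V :\: X ->
    ~~ connect (restr e (V :\: X)) s u.

Definition separates3 (T : finType) (e : rel T) (V X S1 S2 S3 : {set T}) : Prop :=
  [/\ separates e V X S1 S2, separates e V X S1 S3 & separates e V X S2 S3].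

Definition bipartite_on (T : finType) (e : rel T) (W : {set T}) : Prop :=
  exists g : T -> bool, forall u v, u \in W -> v \in W -> e u v -> g u != g v.

Definition OCC (T : finType) (e : rel T) (XB XC XR : {set T}) : Prop :=
  [/\ XB :|: XC :|: XR = setT,
      [&& [disjoint XB & XC], [disjoint XB & XR] & [disjoint XC & XR]],
      bipartite_on e XB,
      (forall u v, u \in XB -> v \in XR -> ~~ e u v)
    & XB :|: XC != set0].

Definition proper2col (T : finType) (e : rel T) (XB : {set T}) (f : T -> bool) : Prop :=
  forall u v, u \in XB -> v \in XB -> e u v -> f u != f v.

(* Auxiliary graph: vertices inl u (copy of u in XB) and inr (v, i) = v^(i)
   for v in XC, i in {0,1} (false = 0, true = 1). *)
Definition auxV (T : finType) := (T + (T * bool))%type.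

Definition aux_vertices (T : finType) (XB XC : {set T}) : {set auxV T} :=
  (inl @: XB) :|: [set x : auxV T | if x is inr (v, _) then v \in XC else false].

Definition aux_terminals (T : finType) (XC : {set T}) : {set auxV T} :=
  [set x : auxV T | if x is inr (v, _) then v \in XC else false].

Definition aux_edge (T : finType) (e : rel T) (XB XC : {set T}) (f : T -> bool)
  : rel (auxV T) :=
  fun x y =>
    match x, y with
    | inl u, inl w => [&& u \in XB, w \in XB & e u w]
    | inl u, inr (v, i) => [&& u \in XB, v \in XC, e v u & i == f u]
    | inr (v, i), inl u => [&& u \in XB, v \in XC, e v u & i == f u]
    | inr _, inr _ => false
    end.

Definition part4 (A : finType) (Tset T1 T2 T3 TX : {set A}) : Prop :=
  T1 :|: T2 :|: T3 :|: TX = Tset /\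
  [&& [disjoint T1 & T2], [disjoint T1 & T3], [disjoint T1 & TX],
      [disjoint T2 & T3], [disjoint T2 & TX] & [disjoint T3 & TX]].

Definition aux_sep (T : finType) (e : rel T) (XB XC : {set T}) (f : T -> bool)
  (S : {set T}) (T1 T2 T3 TX : {set auxV T}) : Prop :=
  separates3 (aux_edge e XB XC f) (aux_vertices XB XC :\: TX) (inl @: S) T1 T2 T3.

Definition star_property (T : finType) (e : rel T) (XB XC : {set T}) (f : T -> bool)
  (Bst : {set T}) : Prop :=
  forall T1 T2 T3 TX : {set auxV T},
    part4 (aux_terminals XC) T1 T2 T3 TX ->
    (exists S : {set T}, [/\ S \subset XB, #|S| <= #|aux_terminals XC|
                           & aux_sep e XB XC f S T1 T2 T3 TX]) ->
    exists S : {set T}, [/\ S \subset Bst, aux_sep e XB XC f S T1 T2 T3 TX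
      & forall S' : {set T}, S' \subset XB -> aux_sep e XB XC f S' T1 T2 T3 TX ->
                             #|S| <= #|S'| ].

From mathcomp Require Import all_boot.

Set Implicit Arguments.
Unset Strict Implicit.
Unset Printing Implicit Defensive.

(* Split the terminals of G_aux: for c in C1 put c^(fC c) into T1 and the other
   copy into T2, put both copies of each c in C2 into T3, and delete all other
   terminals (TX).  Since a vertex b of X_B is adjacent only to the copy
   c^(fX b), the neighbourhoods of T1, T2, T3 in G_aux - TX are exactly A, R, N.
   Terminals are pairwise non-adjacent, so a path of G_aux - TX between two
   classes enters and leaves every terminal through these neighbourhoods; hence
   S separates T1, T2, T3 pairwise in G_aux - TX iff it is an {A,R,N}-separator
   of G[X_B].  Property (star) for this partition gives the claim. *)

Lemma connect_forward_closed (A : finType) (r : rel A) (P : pred A) :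
  (forall x y, P x -> r x y -> P y) -> forall x y, P x -> connect r x y -> P y.
Proof.
move=> closedP x y Px /connectP[p rp ->].
by elim: p x Px rp => //= z p IHp x Px /andP[rxz /(IHp z (closedP _ _ Px rxz))].
Qed.

Lemma connect_homo (A B : finType) (r : rel A) (r' : rel B) (h : A -> B) :
  {homo h : x y / r x y >-> r' x y} -> {homo h : x y / connect r x y >-> connect r' x y}.
Proof.
move=> hr x y; apply: (@connect_forward_closed _ _ (fun z => connect r' (h x) (h z))).
  by move=> z w cxz rzw; apply: connect_trans cxz (connect1 (hr _ _ rzw)).
exact: connect0.
Qed.

Lemma separates_sym (T : finType) (e : rel T) V X S U :
  symmetric e -> separates e V X S U -> separates e V X U S.
Proof.
move=> e_sym sepSU u s uU sS uV sV; rewrite sym_connect_sym; first exact: sepSU.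
by move=> x y; rewrite /restr /= e_sym andbCA.
Qed.

Lemma separatesU (T : finType) (e : rel T) V X S U W :
  separates e V X S U -> separates e V X S W -> separates e V X S (U :|: W).
Proof. by move=> sepU sepW s u sS; rewrite inE => /orP[]; [apply: sepU | apply: sepW]. Qed.

Lemma inr_inl_imset (T : finType) (S : {set T}) p :
  (inr p \in (inl @: S : {set auxV T})) = false.
Proof. by apply/imsetP => -[]. Qed.

Section AuxSeparation.

Variables (T : finType) (e : rel T) (XB XC : {set T}) (f : T -> bool).
Variable TX : {set auxV T}.
Hypothesis TX_terminals : TX \subset aux_terminals XC.

Local Notation Eaux := (aux_edge e XB XC f).
Local Notation V := (aux_vertices XB XC :\: TX).

Lemma aux_edge_inl_inr u p : Eaux (inl u) (inr p) = Eaux (inr p) (inl u).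
Proof. by case: p. Qed.

Lemma inl_mem_aux_minus (S : {set T}) b :
  (inl b \in V :\: inl @: S) = (b \in XB :\: S).
Proof.
have inlNTX : inl b \notin TX by apply/negP => /(subsetP TX_terminals); rewrite inE.
have inl_inj : injective (@inl T (T * bool)) by move=> ? ? [].
by rewrite !inE (negbTE inlNTX) !mem_imset //= orbF.
Qed.

Lemma inr_mem_aux_minus (S : {set T}) p :
  (inr p \in V :\: inl @: S) = (inr p \in V).
Proof. by rewrite in_setD inr_inl_imset. Qed.

Definition attaches (Tt : {set auxV T}) (U : {set T}) : Prop :=
  (forall p b, inr p \in Tt -> Eaux (inr p) (inl b) -> b \in U) /\
  (forall u, u \in U -> exists2 p, inr p \in Tt :&: V & Eaux (inr p) (inl u)).

Lemma separates_of_aux (Ti Tj : {set auxV T}) (Ui Uj S : {set T}) :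
  attaches Ti Ui -> attaches Tj Uj ->
  separates Eaux V (inl @: S) Ti Tj -> separates e XB S Ui Uj.
Proof.
move=> [_ attI] [_ attJ] sepT u w uU wW uXS wXS; apply/negP => cuw.
have [p /setIP[pT pV] epu] := attI u uU.
have [q /setIP[qT qV] eqw] := attJ w wW.
have := sepT _ _ pT qT; rewrite !inr_mem_aux_minus => /(_ pV qV) /negP; apply.
apply: (@connect_trans _ _ (inl u)).
  by apply/connect1/and3P; rewrite inr_mem_aux_minus inl_mem_aux_minus.
apply: (@connect_trans _ _ (inl w)); last first.
  by apply/connect1/and3P; rewrite inl_mem_aux_minus inr_mem_aux_minus aux_edge_inl_inr.
apply: (@connect_homo _ _ _ _ inl) cuw => x y /and3P[xXS yXS exy].
rewrite /restr /= !inl_mem_aux_minus xXS yXS exy.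
by move: xXS yXS; rewrite !inE => /andP[_ ->] /andP[_ ->].
Qed.

Lemma aux_separates_of (Ti Tj Tk : {set auxV T}) (Ui Uj Uk S : {set T}) :
  attaches Ti Ui -> attaches Tj Uj -> attaches Tk Uk ->
  (forall p, inr p \in V -> inr p \in Ti :|: Tj :|: Tk) ->
  Ti \subset aux_terminals XC -> Tj \subset aux_terminals XC -> [disjoint Ti & Tj] ->
  separates e XB S Ui (Uj :|: Uk) -> separates Eaux V (inl @: S) Ti Tj.
Proof.
move=> [attI _] [attJ _] [attK _] cover sTi sTj dTij sepU.
have inlNT (Tt : {set auxV T}) b : Tt \subset aux_terminals XC -> inl b \in Tt = false.
  by move=> sT; apply/negbTE/negP => /(subsetP sT); rewrite inE.
(* Everything reachable from [Ti] avoiding [S] is a copy in [Ti] or a vertex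
   reachable from [Ui] in [G[XB] - S]. *)
pose reached x := if x is inl b
  then [exists a in Ui, (a \in XB :\: S) && connect (restr e (XB :\: S)) a b]
  else x \in Ti.
have reached_closed x y : reached x -> restr Eaux (V :\: inl @: S) x y -> reached y.
  case: x y => [b|p] [b'|q] //=; last by case: p q => ? ? [? ?] _ /and3P[].
  - case/exists_inP=> a aU /andP[aXS cab].
    rewrite /restr /= !inl_mem_aux_minus => /and3P[bXS b'XS /and3P[_ _ ebb']].
    apply/exists_inP; exists a; rewrite // aXS (connect_trans cab) //.
    by apply: connect1; rewrite /restr /= bXS b'XS.
  - case/exists_inP=> a aU /andP[aXS cab].
    case/and3P; rewrite inl_mem_aux_minus inr_mem_aux_minus aux_edge_inl_inr.
    move=> bXS qV eqb; apply/negPn/negP => qNTi.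
    have bUo : b \in Uj :|: Uk.
      move: (cover q qV); rewrite -setUA !inE (negbTE qNTi) /= => /orP[qT|qT].
      + by rewrite (attJ _ _ qT eqb).
      + by rewrite (attK _ _ qT eqb) orbT.
    by move: (sepU _ _ aU bUo aXS bXS); rewrite cab.
  - rewrite /restr /= inl_mem_aux_minus => pTi /and3P[_ b'XS epb'].
    by apply/exists_inP; exists b'; rewrite ?(attI _ _ pTi epb') // b'XS connect0.
move=> [b|p] t; first by rewrite inlNT.
move=> pTi tTj _ _; apply/negP.
move=> /(@connect_forward_closed _ _ reached reached_closed (inr p) t pTi).
case: t tTj => [b|q]; first by rewrite inlNT.
by move=> qTj qTi; rewrite (disjointFr dTij qTi) in qTj.
Qed.

End AuxSeparation.

Lemma part4_subset (A : finType) (Tset T1 T2 T3 TX : {set A}) :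
  part4 Tset T1 T2 T3 TX ->
  [/\ T1 \subset Tset, T2 \subset Tset, T3 \subset Tset & TX \subset Tset].
Proof.
case=> <- _; split; apply/subsetP => x xT; rewrite !inE xT ?orbT //.
Qed.

Lemma aux_sepE (T : finType) (e : rel T) XB XC (f : T -> bool)
    (T1 T2 T3 TX : {set auxV T}) (U1 U2 U3 S : {set T}) :
  symmetric e -> part4 (aux_terminals XC) T1 T2 T3 TX ->
  attaches e XB XC f TX T1 U1 -> attaches e XB XC f TX T2 U2 ->
  attaches e XB XC f TX T3 U3 ->
  aux_sep e XB XC f S T1 T2 T3 TX <-> separates3 e XB S U1 U2 U3.
Proof.
move=> e_sym partT a1 a2 a3.
have [sT1 sT2 sT3 sTX] := part4_subset partT.
case: partT => defT /and5P[d12 d13 _ d23 _].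
have cover p : inr p \in aux_vertices XB XC :\: TX -> inr p \in T1 :|: T2 :|: T3.
  case/setDP=> pV pNTX.
  have : inr p \in aux_terminals XC by rewrite inE inr_inl_imset in pV.
  by rewrite -defT !inE (negbTE pNTX) orbF.
split=> [[s12 s13 s23] | [sU12 sU13 sU23]]; split.
- exact: (separates_of_aux sTX a1 a2 s12).
- exact: (separates_of_aux sTX a1 a3 s13).
- exact: (separates_of_aux sTX a2 a3 s23).
- exact: (aux_separates_of sTX a1 a2 a3 cover sT1 sT2 d12 (separatesU sU12 sU13)).
- have cover132 p : inr p \in aux_vertices XB XC :\: TX -> inr p \in T1 :|: T3 :|: T2.
    by move/cover; rewrite setUAC.
  exact: (aux_separates_of sTX a1 a3 a2 cover132 sT1 sT3 d13 (separatesU sU13 sU12)).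
- have cover231 p : inr p \in aux_vertices XB XC :\: TX -> inr p \in T2 :|: T3 :|: T1.
    by move/cover; rewrite [_ :|: T1]setUC setUA.
  have sU2_13 := separatesU sU23 (separates_sym e_sym sU12).
  exact: (aux_separates_of sTX a2 a3 a1 cover231 sT2 sT3 d23 sU2_13).
Qed.

Definition copies_colored (T : finType) (C : {set T}) (g : T -> bool)
  : {set auxV T} :=
  [set x | if x is inr (c, j) then (c \in C) && (j == g c) else false].

Lemma card_le_aux_terminals (T : finType) (XC : {set T}) :
  #|XC| <= #|aux_terminals XC|.
Proof.
have inr0_inj : injective (fun c : T => inr (c, false) : auxV T) by move=> ? ? [].
rewrite -(card_imset XC inr0_inj); apply: subset_leq_card.
by apply/subsetP => _ /imsetP[c cXC ->]; rewrite inE.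
Qed.

Section ColoredCopies.

Variables (T : finType) (e : rel T) (XB XC D : {set T}) (fX : T -> bool).
Hypothesis e_sym : symmetric e.

Local Notation V := (aux_vertices XB XC :\: aux_terminals D).

Lemma inr_mem_aux_vertices c j : (inr (c, j) \in V) = (c \in XC) && (c \notin D).
Proof. by rewrite !inE inr_inl_imset andbC. Qed.

Lemma attaches_copies_colored (C : {set T}) (g : T -> bool) :
  C \subset XC -> [disjoint C & D] ->
  attaches e XB XC fX (aux_terminals D) (copies_colored C g)
    [set b in XB | [exists c in C, e b c && (fX b == g c)]].
Proof.
move=> sCXC dCD; split=> [[c j] b | u].
  rewrite !inE => /andP[cC /eqP ->] /and4P[bXB _ ecb /eqP gc].
  by rewrite bXB; apply/exists_inP; exists c; rewrite // e_sym ecb gc eqxx.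
rewrite inE => /andP[uXB /exists_inP[c cC /andP[euc /eqP fu]]].
exists (c, g c); first by rewrite in_setI inr_mem_aux_vertices inE cC eqxx
  (subsetP sCXC _ cC) (disjointFr dCD cC).
by rewrite /= uXB (subsetP sCXC _ cC) e_sym euc fu eqxx.
Qed.

Lemma attaches_copies (C : {set T}) :
  C \subset XC -> [disjoint C & D] ->
  attaches e XB XC fX (aux_terminals D) (aux_terminals C)
    [set b in XB | [exists c in C, e b c]].
Proof.
move=> sCXC dCD; split=> [[c j] b | u].
  rewrite !inE => cC /and4P[bXB _ ecb _].
  by rewrite bXB; apply/exists_inP; exists c; rewrite // e_sym.
rewrite inE => /andP[uXB /exists_inP[c cC euc]].
exists (c, fX u); first by rewrite in_setI inr_mem_aux_vertices inE cC
  (subsetP sCXC _ cC) (disjointFr dCD cC).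
by rewrite /= uXB (subsetP sCXC _ cC) e_sym euc eqxx.
Qed.

End ColoredCopies.

Lemma part4_copies (T : finType) (XC C1 C2 : {set T}) (fC : T -> bool) :
  C1 \subset XC -> C2 \subset XC -> [disjoint C1 & C2] ->
  part4 (aux_terminals XC) (copies_colored C1 fC) (copies_colored C1 (negb \o fC))
    (aux_terminals C2) (aux_terminals (XC :\: (C1 :|: C2))).
Proof.
move=> sC1 sC2 dC; split.
  apply/setP => -[b|[c j]]; rewrite !inE //=.
  case c1: (c \in C1); first by rewrite (subsetP sC1 _ c1); case: j; case: (fC c).
  by case c2: (c \in C2); rewrite ?(subsetP sC2 _ c2) ?andbT ?andbF.
apply/and5P; split; [| | | | apply/andP; split];
  rewrite disjoints_subset; apply/subsetP => -[b|[c j]]; rewrite !inE //=;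
  case c1: (c \in C1); rewrite ?(disjointFr dC c1) /= ?andbF //;
  by case: j; case: (fC c); case: (c \in C2).
Qed.

Lemma aux_sep_colored_copiesE (T : finType) (e : rel T) (XB XC : {set T})
    (fX : T -> bool) (C1 C2 : {set T}) (fC : T -> bool) (S : {set T}) :
  symmetric e -> C1 \subset XC -> C2 \subset XC -> [disjoint C1 & C2] ->
  aux_sep e XB XC fX S (copies_colored C1 fC) (copies_colored C1 (negb \o fC))
    (aux_terminals C2) (aux_terminals (XC :\: (C1 :|: C2)))
  <-> separates3 e XB S
        [set b in XB | [exists c in C1, e b c && (fX b == fC c)]]
        [set b in XB | [exists c in C1, e b c && (fX b != fC c)]]
        [set b in XB | [exists c in C2, e b c]].
Proof.
move=> e_sym sC1 sC2 dC.
have dD (C : {set T}) : C \subset C1 :|: C2 -> [disjoint C & XC :\: (C1 :|: C2)].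
  move=> sC; rewrite disjoints_subset; apply/subsetP => c /(subsetP sC) cC.
  by rewrite !inE -(in_setU c C1 C2) cC.
have -> : [set b in XB | [exists c in C1, e b c && (fX b != fC c)]] =
          [set b in XB | [exists c in C1, e b c && (fX b == (negb \o fC) c)]].
  by apply/setP => b; rewrite !inE; congr (_ && _); apply/eq_existsb => c /=; case: (fX b).
apply: aux_sepE (part4_copies fC sC1 sC2 dC) _ _ _ => //.
- by apply: attaches_copies_colored; rewrite ?dD ?subsetUl.
- by apply: attaches_copies_colored; rewrite ?dD ?subsetUl.
- by apply: attaches_copies; rewrite ?dD ?subsetUr.
Qed.

Theorem mainTheorem15 (T : finType) (e : rel T)
  (e_sym : symmetric e) (e_irr : irreflexive e)
  (XB XC XR : {set T}) (fX : T -> bool) (Bst : {set T})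
  (C1 C2 : {set T}) (fC : T -> bool) :
  OCC e XB XC XR ->
  proper2col e XB fX ->
  Bst \subset XB ->
  star_property e XB XC fX Bst ->
  C1 \subset XC -> C2 \subset XC -> [disjoint C1 & C2] ->
  let A := [set b in XB | [exists c in C1, e b c && (fX b == fC c)]] in
  let R := [set b in XB | [exists c in C1, e b c && (fX b != fC c)]] in
  let N := [set b in XB | [exists c in C2, e b c]] in
  (exists S : {set T}, [/\ S \subset XB, #|S| <= #|XC| & separates3 e XB S A R N]) ->
  exists S : {set T}, [/\ S \subset Bst, separates3 e XB S A R N
    & forall S' : {set T}, S' \subset XB -> separates3 e XB S' A R N -> #|S| <= #|S'| ].
Proof.
move=> _ _ _ star sC1 sC2 dC A R N [S0 [S0XB S0card S0sep]].
have sepE S := aux_sep_colored_copiesE XB fX fC S e_sym sC1 sC2 dC.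
have [|S [SBst Ssep Smin]] := star _ _ _ _ (part4_copies fC sC1 sC2 dC).
  exists S0; split=> //; last exact/sepE.
  exact: leq_trans S0card (card_le_aux_terminals XC).
exists S; split=> //; first exact/sepE.
by move=> S' S'XB /sepE; apply: Smin.
Qed.
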